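(* Let $m\ge 0$ and let $n,k$ be integers with $0\le n,k<4\cdot 3^m$. Then $$\binom{n+4\cdot 3^m}{k}_F\equiv \begin{cases}\ \ \binom{n}{k}_F & \text{if } k \text{ is even},\\ -\binom{n}{k}_F & \text{if } k \text{ is odd},\end{cases}\pmod 3,$$ $$\binom{n+8\cdot 3^m}{k}_F\equiv \binom{n}{k}_F \pmod 3,$$ and $$\binom{n+8\cdot 3^m}{k+4\cdot 3^m}_F\equiv \begin{cases}-\binom{n}{k}_F & \text{if } n \text{ is even},\\ \ \ \binom{n}{k}_F & \text{if } n \text{ is odd},\end{cases}\pmod 3.$$
   Context: The Fibonacci numbers are defined by $F_0=0$, $F_1=1$, $F_n=F_{n-1}+F_{n-2}$ for $n\ge 2$. For $n\ge 0$ let $n!_F=F_1F_2\cdots F_n$ (with $0!_F=1$), and for $0\le k\le n$ define the Fibonomial coefficient $\binom{n}{k}_F=\dfrac{n!_F}{k!_F\,(n-k)!_F}$; by convention $\binom{n}{k}_F=0$ if $k<0$ or $k>n$. Note $\binom{n}{k}_F=\binom{n}{n-k}_F$. *)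

From mathcomp Require Import all_boot all_order all_algebra.
Set Implicit Arguments. Unset Strict Implicit. Unset Printing Implicit Defensive.

Fixpoint fib (n : nat) : nat :=
  match n with
  | 0 => 0
  | 1 => 1
  | (m.+1 as p).+1 => fib p + fib m
  end.

Definition fibfact (n : nat) : nat := \prod_(1 <= i < n.+1) fib i.

(* Fibonomial coefficient: n!_F / (k!_F (n-k)!_F) for k <= n, 0 for k > n.
   (The quotient is exact, as Fibonomials are integers.) *)
Definition fibonomial (n k : nat) : nat :=
  if k <= n then fibfact n %/ (fibfact k * fibfact (n - k)) else 0.

From mathcomp Require Import all_boot all_order all_algebra.
From mathcomp Require Import ring zify.
Import GRing.Theory.

(* Write C(n, k) for the Fibonomial coefficient and M = 3^m.  The proof works
   in the field 'F_3 and follows a Lucas-type argument.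
   - The addition formula F_(a+b+1) = F_(a+1) F_(b+1) + F_a F_b yields the
     Pascal-type recurrence C(n+1, k+1) = F_(n-k+1) C(n, k) + F_k C(n, k+1);
     we prove it through an auxiliary recursive function fib_pascal.
   - Modulo 3, F_(j+4) = -F_j.  Feeding this into the recurrence gives
     C(n+4, k) = (-1)^k C(n, k) + (-1)^(n+k) C(n, k-4)  (mod 3),
     and iterating it gives the factorisation, for r, s < 4,
     C(4a+r, 4b+s) = (-1)^(br+sa) C(r, s) binom(a, b)  (mod 3).
   - Ordinary binomials modulo a prime p satisfy
     binom(x + p^m, y) = binom(x, y) + binom(x, y - p^m)  (mod p),
     which computes binom(a+M, b), binom(a+2M, b) and binom(a+2M, b+M) for
     a, b < M.
   - Writing n = 4a+r and k = 4b+s with a, b < M, the three congruences of the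
     theorem follow by comparing signs, and are finally transported from 'F_3
     to congruences of integers. *)

Lemma fib_add a b : fib (a + b).+1 = fib a.+1 * fib b.+1 + fib a * fib b.
Proof.
elim: a b => [|a IH] b; first by rewrite add0n mul1n mul0n addn0.
rewrite addSn -addnS IH.
have -> : fib b.+2 = fib b.+1 + fib b by [].
have -> : fib a.+2 = fib a.+1 + fib a by [].
ring.
Qed.

(* Consecutive Fibonacci numbers from F_1 on are positive, hence so are the
   Fibonorials, which makes the division defining fibonomial exact. *)
Lemma fib_gt0 n : 0 < fib n.+1.
Proof. by elim: n => [|[|n] IH] //=; rewrite addn_gt0 IH. Qed.

Lemma fibfactS n : fibfact n.+1 = fibfact n * fib n.+1.
Proof. by rewrite /fibfact big_nat_recr. Qed.

Lemma fibfact0 : fibfact 0 = 1.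
Proof. by rewrite /fibfact big_nil. Qed.

Lemma fibfact_gt0 n : 0 < fibfact n.
Proof. by elim: n => [|n IH]; rewrite ?fibfact0 // fibfactS muln_gt0 IH fib_gt0. Qed.

(* The Fibonomial triangle defined by its Pascal-type recurrence. *)
Fixpoint fib_pascal (n k : nat) : nat :=
  match n, k with
  | _, 0 => 1
  | 0, _.+1 => 0
  | n'.+1, k'.+1 => fib (n' - k').+1 * fib_pascal n' k' + fib k' * fib_pascal n' k'.+1
  end.

Lemma fib_pascal_small n k : n < k -> fib_pascal n k = 0.
Proof. by elim: n k => [|n IH] [|k] //= lt_nk; rewrite !IH ?muln0 // ltnW. Qed.

Lemma fib_pascalSS n k :
  fib_pascal n.+1 k.+1 = fib (n - k).+1 * fib_pascal n k + fib k * fib_pascal n k.+1.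
Proof. by []. Qed.

(* fib_pascal n k is the exact quotient n!_F / (k!_F (n-k)!_F): the recurrence
   is the addition formula F_(n+1) = F_(n-k+1) F_(k+1) + F_(n-k) F_k. *)
Lemma fib_pascal_spec n k :
  k <= n -> fib_pascal n k * (fibfact k * fibfact (n - k)) = fibfact n.
Proof.
elim: n k => [|n IH] [|k] // le_kn; rewrite ?fibfact0 ?mul1n ?subn0 //.
rewrite fib_pascalSS subSS !fibfactS.
have split_fib : fib n.+1 = fib (n - k).+1 * fib k.+1 + fib (n - k) * fib k.
  by rewrite -fib_add subnK.
have IHk := IH k le_kn.
have [lt_kn|eq_kn] : k < n \/ k = n by lia.
- have IHk1 := IH k.+1 lt_kn; rewrite fibfactS in IHk1.
  have n_k : n - k = (n - k.+1).+1 by rewrite subnS prednK // subn_gt0.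
  by rewrite split_fib mulnDr -{1}IHk -IHk1 n_k fibfactS; ring.
- rewrite {}eq_kn subnn fibfact0 muln1 in IHk *.
  by rewrite (@fib_pascal_small n n.+1) // [fib 1]/= muln0 addn0 mul1n muln1 mulnA IHk.
Qed.

Lemma fibonomialE n k : fibonomial n k = fib_pascal n k.
Proof.
rewrite /fibonomial; case: leqP => [le_kn|lt_nk]; last by rewrite fib_pascal_small.
by rewrite -(@fib_pascal_spec n k le_kn) mulnK // muln_gt0 !fibfact_gt0.
Qed.

Lemma fibonomial_n0 n : fibonomial n 0 = 1.
Proof. by rewrite fibonomialE; case: n. Qed.

Lemma fibonomial_small n k : n < k -> fibonomial n k = 0.
Proof. by rewrite fibonomialE; apply: fib_pascal_small. Qed.

Lemma fibonomialSS n k :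
  fibonomial n.+1 k.+1 = fib (n - k).+1 * fibonomial n k + fib k * fibonomial n k.+1.
Proof. by rewrite !fibonomialE. Qed.

Lemma base4_split n N : n < 4 * N -> exists a r, [/\ n = 4 * a + r, a < N & r < 4].
Proof.
move=> lt_n; exists (n %/ 4), (n %% 4).
by rewrite mulnC -divn_eq ltn_divLR // mulnC ltn_mod.
Qed.

Section BinomialModPrimePower.

Variables p m : nat.
Hypothesis p_prime : prime p.
Local Notation q := (p ^ m)%N.

Lemma q_gt0 : (0 < q)%N.
Proof. by rewrite expn_gt0 prime_gt0. Qed.

(* p divides binom(q, j) for 0 < j < q, since j binom(q, j) = q binom(q-1, j-1). *)
Lemma prime_dvd_bin_pow j : (0 < j < q)%N -> (p %| 'C(q, j))%N.
Proof.
case: j => [|i] // /andP[_ lt_iq].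
apply/negPn/negP => p_ndvd.
have cop : coprime q 'C(q, i.+1) by apply: coprimeXl; rewrite prime_coprime.
have : (q %| i.+1)%N by rewrite -(Gauss_dvdl _ cop) -mul_bin_diag dvdn_mulr.
by move/dvdn_leq => /(_ isT); rewrite leqNgt lt_iq.
Qed.

Local Open Scope ring_scope.

Lemma bin_pow_Fp j : 'C(q, j)%:R = (j == 0%N)%:R + (j == q)%:R :> 'F_p.
Proof.
case: (posnP j) => [->|j_gt0].
  by rewrite bin0 eq_sym (negbTE (lt0n_neq0 q_gt0)) addr0.
rewrite add0r; case: (ltngtP j q) => [lt_jq|lt_qj|->]; last by rewrite binn.
- by apply/eqP; rewrite -(dvdn_pcharf (pchar_Fp p_prime)) prime_dvd_bin_pow ?j_gt0.
- by rewrite bin_small.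
Qed.

Lemma binD_pow_Fp x y :
  'C(x + q, y)%:R = 'C(x, y)%:R + (if (q <= y)%N then 'C(x, y - q)%:R else 0) :> 'F_p.
Proof.
elim: x y => [|x IH] y.
  rewrite add0n bin_pow_Fp !bin0n; case: leqP => [le_qy|lt_yq].
    by rewrite subn_eq0 (@eqn_leq y q) le_qy andbT.
  by rewrite (ltn_eqF lt_yq) addr0.
case: y => [|y]; first by rewrite !bin0 leqNgt q_gt0 addr0.
rewrite addSn !binS !natrD !IH.
case: (ltngtP q y.+1) => [lt_qy|lt_yq|eq_qy].
- by rewrite -ltnS lt_qy (subSn (lt_qy : q <= y)%N) binS natrD; ring.
- by rewrite leqNgt (ltnW lt_yq) /=; ring.
- by rewrite eq_qy ltnn subnn !bin0 /=; ring.
Qed.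

Lemma binD_pow_small x y : (y < q)%N -> 'C(x + q, y)%:R = 'C(x, y)%:R :> 'F_p.
Proof. by move=> lt_yq; rewrite binD_pow_Fp leqNgt lt_yq addr0. Qed.

Lemma binD2_pow_small x y : (y < q)%N -> 'C(x + 2 * q, y)%:R = 'C(x, y)%:R :> 'F_p.
Proof. by move=> lt_yq; rewrite mul2n -addnn addnA !binD_pow_small. Qed.

Lemma binD2_pow_shift x y : (x < q)%N -> (y < q)%N ->
  'C(x + 2 * q, y + q)%:R = 2%:R * 'C(x, y)%:R :> 'F_p.
Proof.
move=> lt_xq lt_yq; rewrite mul2n -addnn addnA binD_pow_Fp leq_addl addnK.
rewrite binD_pow_Fp leq_addl addnK binD_pow_small // bin_small; last first.
  by apply: leq_trans lt_xq (leq_addl _ _).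
by rewrite add0r mulr2n mulrDl mul1r.
Qed.

End BinomialModPrimePower.

Local Open Scope ring_scope.

Definition fib3 (j : nat) : 'F_3 := (fib j)%:R.
Definition fibonomial3 (n k : nat) : 'F_3 := (fibonomial n k)%:R.
Definition fibonomial3_down4 (n k : nat) : 'F_3 :=
  if k is k'.+4 then fibonomial3 n k' else 0.

Lemma F3_two : 2%:R = - 1 :> 'F_3.
Proof. by apply/eqP; rewrite -addr_eq0 natr1 pchar_Fp_0. Qed.

(* F_(j+4) = 3 F_(j+1) + 2 F_j = -F_j modulo 3. *)
Lemma fib3_add4 j : fib3 (j + 4) = - fib3 j.
Proof.
rewrite /fib3 addnC (fib_add 3 j) natrD !natrM /=.
by rewrite pchar_Fp_0 // F3_two mul0r add0r mulN1r.
Qed.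

Lemma fibonomial3SS n k :
  fibonomial3 n.+1 k.+1 = fib3 (n - k).+1 * fibonomial3 n k + fib3 k * fibonomial3 n k.+1.
Proof. by rewrite /fibonomial3 fibonomialSS natrD !natrM. Qed.

Lemma fibonomial3_small n k : (n < k)%N -> fibonomial3 n k = 0.
Proof. by move=> lt_nk; rewrite /fibonomial3 fibonomial_small. Qed.

(* The shifted coefficient obeys the recurrence twisted by F_(j+4) = -F_j. *)
Lemma fibonomial3_down4SS n k :
  fibonomial3_down4 n.+1 k.+1
  = fib3 (n + 4 - k).+1 * fibonomial3_down4 n k - fib3 k * fibonomial3_down4 n k.+1.
Proof.
case: k => [|[|[|[|j]]]]; rewrite /fibonomial3_down4 ?mulr0 ?subr0 //.
  by rewrite /fibonomial3 !fibonomial_n0 /fib3 (_ : fib 3 = 2)%N // F3_two; ring.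
rewrite fibonomial3SS -[j.+4]addn4 fib3_add4 subnDr; ring.
Qed.

Lemma fibonomial3_shift n k :
  fib3 (n + 4 - k).+1 * fibonomial3 n k = - fib3 (n - k).+1 * fibonomial3 n k.
Proof.
case: (leqP k n) => [le_kn|lt_nk]; last by rewrite fibonomial3_small // !mulr0.
by rewrite addnC -addnBA // addnC -addSn fib3_add4.
Qed.

(* Key congruence: C(n+4, k) = (-1)^k C(n, k) + (-1)^(n+k) C(n, k-4) mod 3.
   For n = 0 it says that row 4 of the triangle is 1, 0, 0, 0, 1 modulo 3. *)
Lemma fibonomial3_add4 n k :
  fibonomial3 (n + 4) k
  = (-1) ^+ k * fibonomial3 n k + (-1) ^+ (n + k) * fibonomial3_down4 n k.
Proof.
elim: n k => [|n IH] k.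
  have row4_mid j : (0 < j < 4)%N -> fibonomial3 4 j = 0.
    move=> /andP[j_gt0 j_lt4]; rewrite /fibonomial3 -(Fp_nat_mod (isT : prime 3)).
    by case: j j_gt0 j_lt4 => [|[|[|[|]]]] //; rewrite fibonomialE.
  rewrite /fibonomial3_down4.
  case: k => [|[|[|[|[|k]]]]].
  - by rewrite /fibonomial3 !fibonomial_n0 mulr0 addr0 mul1r.
  1-3: by rewrite row4_mid // fibonomial3_small // !mulr0 addr0.
  - rewrite (@fibonomial3_small 0 4) // /fibonomial3 fibonomial_n0 fibonomialE.
    by rewrite -signr_odd /= mulr0 mulr1 add0r.
  - by rewrite add0n !fibonomial3_small // !mulr0 addr0.
case: k => [|k]; first by rewrite /fibonomial3 !fibonomial_n0 mulr1 mulr0 addr0.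
rewrite addSn !fibonomial3SS !IH fibonomial3_down4SS mulrDr mulrCA fibonomial3_shift.
rewrite (addSn n k.+1) !(addnS n k) !exprS.
ring.
Qed.

Lemma signr_add_even (R : pzRingType) e c : (-1) ^+ (e + 2 * c) = (-1) ^+ e :> R.
Proof. by rewrite exprD exprM sqrrN !expr1n mulr1. Qed.

Lemma signr_mul_odd (R : pzRingType) e c : odd c -> (-1) ^+ (e * c) = (-1) ^+ e :> R.
Proof. by move=> odd_c; rewrite -signr_odd oddM odd_c andbT signr_odd. Qed.

Lemma fibonomial3_add4_low n s :
  (s < 4)%N -> fibonomial3 (n + 4) s = (-1) ^+ s * fibonomial3 n s.
Proof.
move=> s_lt4; rewrite fibonomial3_add4 (_ : fibonomial3_down4 n s = 0) ?mulr0 ?addr0 //.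
by case: s s_lt4 => [|[|[|[|]]]].
Qed.

Lemma fibonomial3_add4_high n k :
  fibonomial3 (n + 4) (k + 4)
  = (-1) ^+ k * fibonomial3 n (k + 4) + (-1) ^+ (n + k) * fibonomial3 n k.
Proof.
have sign4 e : (-1) ^+ (e + 4) = (-1) ^+ e :> 'F_3 := signr_add_even _ e 2.
by rewrite fibonomial3_add4 addnA !sign4 addn4.
Qed.

Lemma fibonomial3_lucas a b r s : (r < 4)%N -> (s < 4)%N ->
  fibonomial3 (4 * a + r) (4 * b + s)
  = (-1) ^+ (b * r + s * a) * fibonomial3 r s * 'C(a, b)%:R.
Proof.
move=> r_lt4 s_lt4; elim: a b => [|a IH] [|b].
- by rewrite !muln0 !add0n bin0 expr0 mul1r mulr1.
- by rewrite bin0n mulr0 fibonomial3_small //; lia.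
- rewrite (_ : 4 * a.+1 + r = 4 * a + r + 4)%N; last by lia.
  have IH0 := IH 0%N; rewrite muln0 add0n in IH0.
  rewrite muln0 add0n fibonomial3_add4_low // IH0 !bin0 !mul0n !add0n !mulr1.
  by rewrite mulrA -exprD mulnS.
- rewrite (_ : 4 * a.+1 + r = 4 * a + r + 4)%N; last by lia.
  rewrite (_ : 4 * b.+1 + s = 4 * b + s + 4)%N; last by lia.
  rewrite fibonomial3_add4_high (_ : 4 * b + s + 4 = 4 * b.+1 + s)%N; last by lia.
  rewrite !IH binS natrD !mulrA -!exprD.
  rewrite (_ : 4 * b + s + (b.+1 * r + s * a) = b.+1 * r + s * a.+1 + 2 * (2 * b))%N;
    last by lia.
  rewrite (_ : 4 * a + r + (4 * b + s) + (b * r + s * a)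
             = b.+1 * r + s * a.+1 + 2 * (2 * a + 2 * b))%N; last by lia.
  by rewrite !signr_add_even; ring.
Qed.

Lemma fibonomial3_periods m n k : (n < 4 * 3 ^ m)%N -> (k < 4 * 3 ^ m)%N ->
  [/\ fibonomial3 (n + 4 * 3 ^ m) k = (-1) ^+ k * fibonomial3 n k,
      fibonomial3 (n + 8 * 3 ^ m) k = fibonomial3 n k &
      fibonomial3 (n + 8 * 3 ^ m) (k + 4 * 3 ^ m) = - (-1) ^+ n * fibonomial3 n k].
Proof.
move=> lt_n lt_k.
have odd_q : odd (3 ^ m) by rewrite oddX orbT.
have [a [r [-> lt_a lt_r]]] := base4_split _ _ lt_n.
have [b [s [-> lt_b lt_s]]] := base4_split _ _ lt_k.
have sign4 c e : (-1) ^+ (4 * c + e) = (-1) ^+ e :> 'F_3.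
  by rewrite addnC -(signr_add_even _ e (2 * c)%N) mulnA.
rewrite (_ : 4 * a + r + 4 * 3 ^ m = 4 * (a + 3 ^ m) + r)%N; last by ring.
rewrite (_ : 4 * a + r + 8 * 3 ^ m = 4 * (a + 2 * 3 ^ m) + r)%N; last by ring.
rewrite (_ : 4 * b + s + 4 * 3 ^ m = 4 * (b + 3 ^ m) + s)%N; last by ring.
rewrite !fibonomial3_lucas // binD_pow_small // binD2_pow_small // binD2_pow_shift //.
rewrite (_ : b * r + s * (a + 3 ^ m) = b * r + s * a + s * 3 ^ m)%N; last by ring.
rewrite (_ : b * r + s * (a + 2 * 3 ^ m) = b * r + s * a + 2 * (s * 3 ^ m))%N; last by ring.
rewrite (_ : (b + 3 ^ m) * r + s * (a + 2 * 3 ^ m)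
           = b * r + s * a + r * 3 ^ m + 2 * (s * 3 ^ m))%N; last by ring.
rewrite !sign4 !signr_add_even !exprD !(@signr_mul_odd _ _ _ odd_q) F3_two.
by split; ring.
Qed.

Lemma Fp_signed_congr p x y (b : bool) : prime p ->
  (x%:R : 'F_p) = (-1) ^+ b * y%:R ->
  (x%:Z = (if b then - y%:Z else y%:Z) %[mod p])%Z.
Proof.
move=> p_prime eq_xy; apply/eqP.
rewrite eqz_mod_dvd (dvdz_pcharf (pchar_Fp p_prime)) rmorphB /= subr_eq0.
by move: eq_xy; case: b => eq_xy; rewrite ?rmorphN /= -!pmulrn eq_xy ?mulN1r ?mul1r.
Qed.

Theorem mainTheorem5 (m n k : nat) (hn : (n < 4 * 3 ^ m)%N) (hk : (k < 4 * 3 ^ m)%N) :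
  ((fibonomial (n + 4 * 3 ^ m) k)%:Z
     = (if odd k then - (fibonomial n k)%:Z else (fibonomial n k)%:Z) %[mod 3])%Z
  /\ ((fibonomial (n + 8 * 3 ^ m) k)%:Z = (fibonomial n k)%:Z %[mod 3])%Z
  /\ ((fibonomial (n + 8 * 3 ^ m) (k + 4 * 3 ^ m))%:Z
     = (if odd n then (fibonomial n k)%:Z else - (fibonomial n k)%:Z) %[mod 3])%Z.
Proof.
have [shift4 shift8 shift8_4] := fibonomial3_periods _ _ _ hn hk.
split; [|split].
- by apply: Fp_signed_congr => //; rewrite signr_odd; exact: shift4.
- by apply: (@Fp_signed_congr _ _ _ false) => //; rewrite mul1r; exact: shift8.
- rewrite -(if_neg (odd n)); apply: Fp_signed_congr => //.
  by rewrite signrN signr_odd; exact: shift8_4.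
Qed.
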